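(* Let $D$ be a knot diagram. Then there exist at least four mutually distinct sets of regions of $D$ that are ineffective for $D$.
   Context: A link diagram is a regular projection of a link into the plane with over/under information at each double point (crossing); a knot diagram is a diagram of a link with one component. The regions of a diagram are the connected components of the complement in the plane of the projection. A crossing touches a region $R$ if it lies on the boundary of $R$. A region crossing change at a region $R$ is the local move changing (switching over and under at) each crossing touching $R$, each such crossing being changed exactly once. For a set $\mathcal{R}=\{R,R',\dots,R''\}$ of mutually distinct regions, ''region crossing changes about $\mathcal{R}$'' means applying the region crossing change at each region of $\mathcal{R}$ once (the order does not matter); about $\emptyset$ means doing nothing. Thus a crossing is changed in the end iff it touches an odd number of regions of $\mathcal{R}$. A set $\mathcal{R}^{\ast}$ of regions of a diagram is ineffective if region crossing changes about $\mathcal{R}^{\ast}$ do not change the diagram in consequence. *)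

From mathcomp Require Import all_boot all_order.
Set Implicit Arguments. Unset Strict Implicit. Unset Printing Implicit Defensive.

(* A link diagram, encoded combinatorially as a 4-valent plane map
   (darts, vertex rotation [rot], edge involution [edge]) together with
   the crossings (vertices = rot-orbits), the regions (faces = orbits of
   rot \o edge) and the over/under information at each crossing. *)
Record diagram := Diagram {
  dart : finType;
  crossing : finType;
  region : finType;
  rot : dart -> dart;
  edge : dart -> dart;
  vert : dart -> crossing;
  face : dart -> region;     (* the region lying at the corner following a dart *)
  over : crossing -> bool
}.

Definition face_step (D : diagram) (d : dart D) : dart D := @rot D (@edge D d).

(* straight-ahead step along the curve: cross the edge, then go to the
   opposite dart at the next crossing *)
Definition straight (D : diagram) (d : dart D) : dart D :=
  @rot D (@rot D (@edge D d)).

(* Conditions making D a knot diagram (regular projection of one circle,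
   connected plane 4-valent map with transversal double points), or the
   crossingless diagram of a circle (no crossings, two regions). *)
Definition is_knot_diagram (D : diagram) : Prop :=
  (#|dart D| = 0 /\ #|crossing D| = 0 /\ #|region D| = 2)
  \/
  [/\ [/\ injective (@rot D),
          (forall d, @edge D (@edge D d) = d),
          (forall d, @edge D d != d)
        & (forall d, order (@rot D) d = 4)],
      [/\ (forall d1 d2, @vert D d1 = @vert D d2 <-> fconnect (@rot D) d1 d2),
          (forall d1 d2, @face D d1 = @face D d2 <-> fconnect (@face_step D) d1 d2),
          (forall c, exists d, @vert D d = c)
        & (forall r, exists d, @face D d = r)],
      (forall d1 d2, connect (fun x y => (y == @rot D x) || (y == @edge D x)) d1 d2),
      (* Euler formula V - E + F = 2 : the map is planar (spherical) *)
      #|crossing D| + #|region D| = (#|dart D|)./2 + 2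
    & (* one component: the straight-ahead walk has exactly two orbits
         (the single component traversed in its two directions) *)
      fcard (@straight D) (dart D) = 2 ].

Definition touches (D : diagram) (c : crossing D) (r : region D) : bool :=
  [exists d, (@vert D d == c) && (@face D d == r)].

Definition rcc (D : diagram) (S : {set region D}) : crossing D -> bool :=
  fun c => @over D c (+) odd #|[set r in S | touches c r]|.

(* S is ineffective: the region crossing changes about S leave the diagram
   unchanged (only the over/under information can change). *)
Definition ineffective (D : diagram) (S : {set region D}) : Prop :=
  rcc S = @over D.

From Stdlib Require Import FunctionalExtensionality.
From mathcomp Require Import all_boot zify.
Set Implicit Arguments. Unset Strict Implicit. Unset Printing Implicit Defensive.

(* A region crossing change about S changes crossing c iff c touches an odd
   number of regions of S, so S is ineffective exactly when its parity vector
   [c |-> #|{r in S | c touches r}| mod 2] vanishes.  This vector is additive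
   for symmetric difference, hence its zero fibre is as large as any other
   fibre and 2^#regions <= 2^#crossings * #ineffective sets.  A knot diagram
   with n crossings is 4-valent, so it has 2n edges and, by the Euler formula,
   n + 2 regions, which leaves at least 2^2 = 4 ineffective sets. *)

Lemma card_sum_fibers (T U : finType) (f : T -> U) :
  #|T| = \sum_(u : U) #|[set x | f x == u]|.
Proof.
rewrite -sum1_card (partition_big f xpredT) //=.
by apply: eq_bigr => u _; rewrite -sum1_card; apply: eq_bigl => x; rewrite inE.
Qed.

Lemma card_gt3_uniq (T : finType) (A : {set T}) :
  3 < #|A| ->
  exists x1 x2 x3 x4,
    [/\ x1 \in A, x2 \in A, x3 \in A & x4 \in A] /\ uniq [:: x1; x2; x3; x4].
Proof.
rewrite cardE; have := enum_uniq (mem A); have mem_enumA := mem_enum (mem A).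
case: (enum _) mem_enumA => [|x1 [|x2 [|x3 [|x4 s]]]] // inA uniq_s _.
exists x1, x2, x3, x4; split; first by split; rewrite -inA !inE eqxx ?orbT.
by move: (take_uniq 4 uniq_s); rewrite !take_cons take0.
Qed.

Section SymmetricDifference.
Variable T : finType.
Implicit Types A B : {set T}.

Definition symdiff A B : {set T} := [set x | (x \in A) (+) (x \in B)].

Lemma symdiffK A : cancel (symdiff A) (symdiff A).
Proof. by move=> B; apply/setP=> x; rewrite !inE addKb. Qed.

Lemma card_symdiff A B : #|symdiff A B| + (#|A :&: B|).*2 = #|A| + #|B|.
Proof.
have -> : symdiff A B = (A :\: B) :|: (B :\: A).
  by apply/setP=> x; rewrite !inE; case: (x \in A); case: (x \in B).
rewrite cardsU.
have -> : (A :\: B) :&: (B :\: A) = set0.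
  by apply/setP=> x; rewrite !inE; case: (x \in A); case: (x \in B).
rewrite cards0 subn0 -(cardsID B A) -(cardsID A B) setIC -addnn.
lia.
Qed.

Lemma odd_card_symdiff A B : odd #|symdiff A B| = odd #|A| (+) odd #|B|.
Proof. by rewrite -oddD -card_symdiff oddD odd_double addbF. Qed.

End SymmetricDifference.

Section Parity.
Variable D : diagram.
Implicit Types S : {set region D}.

Definition parity S : {ffun crossing D -> bool} :=
  [ffun c => odd #|[set r in S | touches c r]|].

Definition parity_ker : {set {set region D}} :=
  [set S | parity S == [ffun => false]].

Lemma parity_symdiff S1 S2 c :
  parity (symdiff S1 S2) c = parity S1 c (+) parity S2 c.
Proof.
rewrite !ffunE -odd_card_symdiff; congr (odd _); apply: eq_card => r.
by rewrite !inE; case: touches; rewrite ?andbT ?andbF.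
Qed.

Lemma parity_ker_ineffective S : S \in parity_ker -> ineffective S.
Proof.
rewrite inE => /eqP parity0; apply: functional_extensionality => c.
have := congr1 (fun f : {ffun crossing D -> bool} => f c) parity0.
rewrite /= !ffunE /rcc => ->.
exact: addbF.
Qed.

Lemma card_parity_fiber y : #|[set S | parity S == y]| <= #|parity_ker|.
Proof.
have [-> | [S0 fibS0]] := set_0Vmem [set S | parity S == y].
  by rewrite cards0.
rewrite -(card_imset _ (can_inj (symdiffK S0))); apply/subset_leq_card.
apply/subsetP=> _ /imsetP[S fibS ->]; rewrite !inE in fibS0 fibS *.
apply/eqP/ffunP=> c.
by rewrite parity_symdiff (eqP fibS0) (eqP fibS) !ffunE addbb.
Qed.

Lemma card_parity_ker : 2 ^ #|region D| <= 2 ^ #|crossing D| * #|parity_ker|.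
Proof.
rewrite -cardsT -card_powerset powersetT cardsT (card_sum_fibers parity).
apply: (@leq_trans (\sum_(y : {ffun crossing D -> bool}) #|parity_ker|)).
  by apply: leq_sum => y _; apply: card_parity_fiber.
by rewrite sum_nat_const card_ffun card_bool.
Qed.

End Parity.

Lemma card_dart_vertices (D : diagram) :
  (forall d, order (@rot D) d = 4) ->
  (forall d1 d2, @vert D d1 = @vert D d2 <-> fconnect (@rot D) d1 d2) ->
  (forall c, exists d, @vert D d = c) ->
  #|dart D| = 4 * #|crossing D|.
Proof.
move=> order4 vert_orbit vert_onto.
rewrite (card_sum_fibers (@vert D)) mulnC -sum_nat_const.
apply: eq_bigr => c _; have [d <-] := vert_onto c.
rewrite -(order4 d); apply: eq_card => d'.
by rewrite inE eq_sym; apply/eqP/idP => /vert_orbit.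
Qed.

Lemma knot_card_region (D : diagram) :
  is_knot_diagram D -> #|crossing D| + 2 <= #|region D|.
Proof.
case=> [[_ [-> ->]] // | [[_ _ _ order4] [vert_orbit _ vert_onto _] _ euler _]].
move: euler; rewrite (card_dart_vertices order4 vert_orbit vert_onto).
lia.
Qed.

Lemma knot_card_parity_ker (D : diagram) :
  is_knot_diagram D -> 3 < #|parity_ker D|.
Proof.
move=> /knot_card_region regions_ge.
rewrite -(@ltn_pmul2l (2 ^ #|crossing D|)) ?expn_gt0 //.
have regions_pow := leq_pexp2l (isT : 0 < 2) regions_ge.
apply: leq_trans (leq_trans regions_pow (card_parity_ker D)).
by rewrite expnD ltn_pmul2l ?expn_gt0.
Qed.

Theorem lemma2p4 (D : diagram) :
  is_knot_diagram D ->
  exists S1 S2 S3 S4 : {set region D},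
    [/\ ineffective S1, ineffective S2, ineffective S3 & ineffective S4] /\
    uniq [:: S1; S2; S3; S4].
Proof.
move=> /knot_card_parity_ker /card_gt3_uniq[S1 [S2 [S3 [S4 [inS uniqS]]]]].
exists S1, S2, S3, S4; split=> //.
by case: inS => ????; split; apply: parity_ker_ineffective.
Qed.
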